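(* Let $\alpha\neq0$ and consider the $1$-parameter family of Monge forms $f(x,y,t)=y^2+x^2y+\tfrac14x^4+\alpha x^5+tx^3$. Then the family of asymptotic BDEs $f_{yy}\,dy^2+2f_{xy}\,dx\,dy+f_{xx}\,dx^2=0$ (parametrized by $t$ near $0$) is fiber topologically equivalent, at $(x,y,t)=0$, to the family $dy^2+(-y+x^3+tx)\,dx^2=0$.
   Context: Two families of BDEs $\{\omega_{t}\}$ and $\{\omega'_{t}\}$ on $(\mathbb{R}^2,0)$ parametrized by $t\in(\mathbb{R},0)$ are fiber topologically equivalent if there is a germ of homeomorphism $(x,y,t)\mapsto(h(x,y,t),k(t))$ of $(\mathbb{R}^3,0)$, with $k$ a homeomorphism germ of the parameter line, such that for each $t$ the map $h(\cdot,\cdot,t)$ sends integral curves of $\omega_{t}$ to integral curves of $\omega'_{k(t)}$. *)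

From Stdlib Require Import Reals.
Open Scope R_scope.

Definition P3 : Type := (R * R * R)%type.
Definition orig3 : P3 := (0, 0, 0).
Definition dist3 (p q : P3) : R :=
  match p, q with
  | (x1, y1, t1), (x2, y2, t2) =>
      Rmax (Rabs (x1 - x2)) (Rmax (Rabs (y1 - y2)) (Rabs (t1 - t2)))
  end.

Definition open3 (U : P3 -> Prop) : Prop :=
  forall p, U p -> exists e, 0 < e /\ forall q, dist3 p q < e -> U q.
Definition cont_on3 (F : P3 -> P3) (U : P3 -> Prop) : Prop :=
  forall p, U p -> forall e, 0 < e -> exists d, 0 < d /\
    forall q, U q -> dist3 p q < d -> dist3 (F p) (F q) < e.

(* F restricted to the open neighbourhood U of 0 is a homeomorphism onto
   the open neighbourhood V of 0, with inverse G, and F 0 = 0.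
   (A representative of a germ of homeomorphism of (R^3,0).) *)
Definition homeo3_on (F : P3 -> P3) (U V : P3 -> Prop) (G : P3 -> P3) : Prop :=
  open3 U /\ open3 V /\ U orig3 /\ V orig3 /\ F orig3 = orig3 /\
  (forall p, U p -> V (F p) /\ G (F p) = p) /\
  (forall q, V q -> U (G q) /\ F (G q) = q) /\
  cont_on3 F U /\ cont_on3 G V.

Definition open1 (U : R -> Prop) : Prop :=
  forall p, U p -> exists e, 0 < e /\ forall q, Rabs (p - q) < e -> U q.
Definition cont_on1 (F : R -> R) (U : R -> Prop) : Prop :=
  forall p, U p -> forall e, 0 < e -> exists d, 0 < d /\
    forall q, U q -> Rabs (p - q) < d -> Rabs (F p - F q) < e.

Definition homeo_germ1 (k : R -> R) : Prop :=
  exists (U V : R -> Prop) (l : R -> R),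
    open1 U /\ open1 V /\ U 0 /\ V 0 /\ k 0 = 0 /\
    (forall p, U p -> V (k p) /\ l (k p) = p) /\
    (forall q, V q -> U (l q) /\ k (l q) = q) /\
    cont_on1 k U /\ cont_on1 l V.

(* A family of BDEs  a dy^2 + 2 b dx dy + c dx^2 = 0, coefficients
   depending on (x, y, t). *)
Record BDEfam : Type := mkBDE {
  bde_a : R -> R -> R -> R;
  bde_b : R -> R -> R -> R;
  bde_c : R -> R -> R -> R }.

Definition integral_curve (w : BDEfam) (t s0 s1 : R) (g1 g2 : R -> R) : Prop :=
  s0 < s1 /\
  exists d1 d2 : R -> R, forall s, s0 < s < s1 ->
    derivable_pt_lim g1 s (d1 s) /\ derivable_pt_lim g2 s (d2 s) /\
    continuity_pt d1 s /\ continuity_pt d2 s /\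
    (d1 s <> 0 \/ d2 s <> 0) /\
    bde_a w (g1 s) (g2 s) t * (d2 s) ^ 2
      + 2 * bde_b w (g1 s) (g2 s) t * d1 s * d2 s
      + bde_c w (g1 s) (g2 s) t * (d1 s) ^ 2 = 0.

(* Fiber topological equivalence of two families of BDEs at 0:
   a germ of homeomorphism (x,y,t) |-> (h(x,y,t), k(t)) of (R^3,0), k a germ
   of homeomorphism of (R,0), such that for each t, h(.,.,t) sends
   integral curves of w_t (inside the domain) onto integral curves of
   w'_{k(t)} (equality of traces). *)
Definition fiber_top_equiv (w w' : BDEfam) : Prop :=
  exists (h1 h2 : R -> R -> R -> R) (k : R -> R)
         (U V : P3 -> Prop) (G : P3 -> P3),
    homeo_germ1 k /\
    homeo3_on (fun p => match p with (x, y, t) => (h1 x y t, h2 x y t, k t) end)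
              U V G /\
    forall (t s0 s1 : R) (g1 g2 : R -> R),
      integral_curve w t s0 s1 g1 g2 ->
      (forall s, s0 < s < s1 -> U (g1 s, g2 s, t)) ->
      exists (s0' s1' : R) (e1 e2 : R -> R),
        integral_curve w' (k t) s0' s1' e1 e2 /\
        forall u v : R,
          (exists s, s0 < s < s1 /\
             h1 (g1 s) (g2 s) t = u /\ h2 (g1 s) (g2 s) t = v) <->
          (exists s', s0' < s' < s1' /\ e1 s' = u /\ e2 s' = v).

Definition is_partial_x (F Fx : R -> R -> R -> R) : Prop :=
  forall x y t, derivable_pt_lim (fun u => F u y t) x (Fx x y t).
Definition is_partial_y (F Fy : R -> R -> R -> R) : Prop :=
  forall x y t, derivable_pt_lim (fun u => F x u t) y (Fy x y t).

Definition monge_f (alpha : R) (x y t : R) : R :=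
  y ^ 2 + x ^ 2 * y + / 4 * x ^ 4 + alpha * x ^ 5 + t * x ^ 3.

Definition normal_form : BDEfam :=
  mkBDE (fun _ _ _ => 1) (fun _ _ _ => 0) (fun x y t => - y + x ^ 3 + t * x).

(** The Monge form is brought to the normal form by an explicit polynomial
    change of coordinates.  Completing the square in the asymptotic BDE
    [2 dy^2 + 4x dx dy + (2y + 6tx + 3x^2 + 20 alpha x^3) dx^2] with
    [Y = y + x^2/2] leaves [2 dY^2 + (2Y + 6tx + 20 alpha x^3) dx^2]; the
    scalings [X = 10 alpha x], [Y' = -(10 alpha)^2 Y], [T = 30 alpha t],
    possible because [alpha <> 0], then turn it into a multiple of the normal
    form.  This polynomial diffeomorphism maps integral curves to integral
    curves with the same parametrization. *)

From Stdlib Require Import Reals Lra FunctionalExtensionality.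
From Coquelicot Require Import Coquelicot.
Open Scope R_scope.

Definition bde_form (w : BDEfam) (x y t dx dy : R) : R :=
  bde_a w x y t * dy ^ 2 + 2 * bde_b w x y t * dx * dy + bde_c w x y t * dx ^ 2.

Definition shear_map (c1 c2 c3 : R) (p : P3) : P3 :=
  match p with (x, y, t) => (c1 * x, c2 * (y + x ^ 2 / 2), c3 * t) end.

Definition shear_inv (c1 c2 c3 : R) (p : P3) : P3 :=
  match p with (X, Y, T) => (/ c1 * X, / c2 * Y - (/ c1 * X) ^ 2 / 2, / c3 * T) end.

Lemma ball_P3 (p q : P3) (e : R) : ball p e q <-> dist3 p q < e.
Proof.
  destruct p as [[x1 y1] t1], q as [[x2 y2] t2].
  change (((ball x1 e x2 /\ ball y1 e y2) /\ ball t1 e t2) <-> dist3 (x1, y1, t1) (x2, y2, t2) < e).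
  cbn; unfold AbsRing_ball, abs, minus, plus, opp; cbn.
  rewrite !Rmax_Rlt, (Rabs_minus_sym x1), (Rabs_minus_sym y1), (Rabs_minus_sym t1).
  tauto.
Qed.

Lemma continuous_dist3 (f : P3 -> R) (p : P3) : continuous f p ->
  forall e, 0 < e -> exists d, 0 < d /\ forall q, dist3 p q < d -> Rabs (f p - f q) < e.
Proof.
  intros Hf e He.
  destruct (proj1 (filterlim_locally f (f p)) Hf (mkposreal e He)) as [d Hd].
  exists d; split; [apply cond_pos |].
  intros q Hq; rewrite Rabs_minus_sym.
  exact (Hd q (proj2 (ball_P3 p q d) Hq)).
Qed.

Lemma cont_on3_of_components (F : P3 -> P3) (F1 F2 F3 : P3 -> R) (U : P3 -> Prop) :
  (forall p, F p = (F1 p, F2 p, F3 p)) ->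
  (forall p, continuous F1 p) -> (forall p, continuous F2 p) ->
  (forall p, continuous F3 p) ->
  cont_on3 F U.
Proof.
  intros EF H1 H2 H3 p _ e He.
  destruct (continuous_dist3 F1 p (H1 p) e He) as [d1 [Hd1 D1]].
  destruct (continuous_dist3 F2 p (H2 p) e He) as [d2 [Hd2 D2]].
  destruct (continuous_dist3 F3 p (H3 p) e He) as [d3 [Hd3 D3]].
  exists (Rmin d1 (Rmin d2 d3)); split; [now repeat apply Rmin_pos |].
  intros q _ Hq.
  pose proof (Rmin_l d1 (Rmin d2 d3)); pose proof (Rmin_r d1 (Rmin d2 d3)).
  pose proof (Rmin_l d2 d3); pose proof (Rmin_r d2 d3).
  rewrite !EF; cbn; rewrite !Rmax_Rlt.
  repeat split; [apply D1 | apply D2 | apply D3]; lra.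
Qed.

Lemma continuous_P3_x (p : P3) : continuous (fun q : P3 => fst (fst q)) p.
Proof.
  destruct p as [[x y] t].
  apply (continuous_comp fst fst); [apply continuous_fst | apply continuous_fst].
Qed.

Lemma continuous_P3_y (p : P3) : continuous (fun q : P3 => snd (fst q)) p.
Proof.
  destruct p as [[x y] t].
  apply (continuous_comp fst snd); [apply continuous_fst | apply continuous_snd].
Qed.

Lemma continuous_P3_t (p : P3) : continuous (fun q : P3 => snd q) p.
Proof. destruct p as [[x y] t]; apply continuous_snd. Qed.

Section RealContinuity.
Context {U : UniformSpace}.

Lemma continuous_Rplus (f g : U -> R) (p : U) :
  continuous f p -> continuous g p -> continuous (fun q => f q + g q) p.
Proof. intros; now apply (continuous_plus (K := R_AbsRing) f g). Qed.

Lemma continuous_Rmult (f g : U -> R) (p : U) :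
  continuous f p -> continuous g p -> continuous (fun q => f q * g q) p.
Proof. intros; now apply (continuous_mult (K := R_AbsRing) f g). Qed.

Lemma continuous_Ropp (f : U -> R) (p : U) :
  continuous f p -> continuous (fun q => - f q) p.
Proof. intros; now apply (continuous_opp (K := R_AbsRing) f). Qed.

Lemma continuous_Rpow (f : U -> R) (n : nat) (p : U) :
  continuous f p -> continuous (fun q => f q ^ n) p.
Proof.
  intros Hf; induction n as [| n IH]; cbn.
  - apply continuous_const.
  - now apply continuous_Rmult.
Qed.

End RealContinuity.

(* Syntax-directed on purpose: blindly applying [continuous_Rmult] makes
   unification unfold real numerals such as [2] into products, which is very slow. *)
Ltac continuous_poly := repeat match goal with
  | |- continuous (fun _ => ?c) _ => apply continuous_const
  | |- continuous (fun q => fst (fst q)) _ => apply continuous_P3_x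
  | |- continuous (fun q => snd (fst q)) _ => apply continuous_P3_y
  | |- continuous (fun q => snd q) _ => apply continuous_P3_t
  | |- continuous (fun q => @?f q + @?g q) _ => apply (continuous_Rplus f g)
  | |- continuous (fun q => @?f q * @?g q) _ => apply (continuous_Rmult f g)
  | |- continuous (fun q => - @?f q) _ => apply (continuous_Ropp f)
  | |- continuous (fun q => @?f q ^ _) _ => apply (continuous_Rpow f)
  end.

Lemma cont_on1_scal (c : R) (U : R -> Prop) : cont_on1 (fun t => c * t) U.
Proof.
  intros p _ e He.
  pose proof (Rabs_pos c) as Hc.
  exists (e / (Rabs c + 1)); split; [apply Rdiv_lt_0_compat; lra |].
  intros q _ Hq.
  rewrite <- Rmult_minus_distr_l, Rabs_mult.
  assert (Hq' : Rabs (p - q) * (Rabs c + 1) < e).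
  { apply (Rmult_lt_compat_r (Rabs c + 1)) in Hq; [| lra].
    now replace (e / (Rabs c + 1) * (Rabs c + 1)) with e in Hq by (field; lra). }
  pose proof (Rabs_pos (p - q)); nra.
Qed.

Lemma open1_full : open1 (fun _ => True).
Proof. intros p _; exists 1; split; [lra | easy]. Qed.

Lemma open3_full : open3 (fun _ => True).
Proof. intros p _; exists 1; split; [lra | easy]. Qed.

Lemma homeo_germ1_scal (c : R) : c <> 0 -> homeo_germ1 (fun t => c * t).
Proof.
  intros Hc.
  exists (fun _ => True), (fun _ => True), (fun t => / c * t).
  do 4 (split; [first [apply open1_full | exact I] |]).
  split; [ring |].
  split; [intros p _; split; [exact I | now field] |].
  split; [intros q _; split; [exact I | now field] |].
  split; apply cont_on1_scal.
Qed.

Lemma homeo3_on_shear (c1 c2 c3 : R) : c1 <> 0 -> c2 <> 0 -> c3 <> 0 ->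
  homeo3_on (shear_map c1 c2 c3) (fun _ => True) (fun _ => True) (shear_inv c1 c2 c3).
Proof.
  intros H1 H2 H3.
  do 4 (split; [first [apply open3_full | exact I] |]).
  split; [unfold orig3; cbn; f_equal; [f_equal |]; field |].
  split; [intros [[x y] t] _; split; [exact I | cbn; f_equal; [f_equal |]; now field] |].
  split; [intros [[x y] t] _; split; [exact I | cbn; f_equal; [f_equal |]; now field] |].
  split.
  - apply (cont_on3_of_components _
      (fun q => c1 * fst (fst q))
      (fun q => c2 * (snd (fst q) + fst (fst q) ^ 2 * / 2))
      (fun q => c3 * snd q)); [now intros [[x y] t] | ..]; intros; continuous_poly.
  - apply (cont_on3_of_components _
      (fun q => / c1 * fst (fst q))
      (fun q => / c2 * snd (fst q) + - ((/ c1 * fst (fst q)) ^ 2 * / 2))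
      (fun q => / c3 * snd q)); [now intros [[x y] t] | ..]; intros; continuous_poly.
Qed.

Lemma derivable_pt_lim_shear (c : R) (g1 g2 : R -> R) (s d1 d2 : R) :
  derivable_pt_lim g1 s d1 -> derivable_pt_lim g2 s d2 ->
  derivable_pt_lim (fun u => c * (g2 u + g1 u ^ 2 / 2)) s (c * (d2 + g1 s * d1)).
Proof.
  rewrite <- !is_derive_Reals => D1 D2.
  assert (Dsq : is_derive (fun u => g1 u ^ 2 / 2) s (scal d1 (g1 s))).
  { apply (is_derive_comp (fun x => x ^ 2 / 2) g1); [auto_derive; [easy | field] | exact D1]. }
  replace (d2 + g1 s * d1) with (plus d2 (scal d1 (g1 s))) by (cbn; ring).
  apply is_derive_scal, (is_derive_plus g2 (fun u => g1 u ^ 2 / 2)); assumption.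
Qed.

Section ShearTransport.
Variables (w w' : BDEfam) (c1 c2 c3 lam : R).
Hypotheses (Hc1 : c1 <> 0) (Hc2 : c2 <> 0).
Hypothesis shear_pullback : forall x y t dx dy,
  bde_form w' (c1 * x) (c2 * (y + x ^ 2 / 2)) (c3 * t) (c1 * dx) (c2 * (dy + x * dx))
  = lam * bde_form w x y t dx dy.

Lemma integral_curve_shear (t s0 s1 : R) (g1 g2 : R -> R) :
  integral_curve w t s0 s1 g1 g2 ->
  integral_curve w' (c3 * t) s0 s1 (fun s => c1 * g1 s) (fun s => c2 * (g2 s + g1 s ^ 2 / 2)).
Proof.
  intros [Hs [d1 [d2 Hd]]]; split; [exact Hs |].
  exists (fun s => c1 * d1 s), (fun s => c2 * (d2 s + g1 s * d1 s)).
  intros s Hs'; destruct (Hd s Hs') as (D1 & D2 & C1 & C2 & Reg & E).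
  assert (G1 : continuity_pt g1 s) by (apply derivable_continuous_pt; now exists (d1 s)).
  split; [| split; [| split; [| split; [| split]]]].
  - exact (derivable_pt_lim_scal g1 c1 s (d1 s) D1).
  - exact (derivable_pt_lim_shear c2 g1 g2 s (d1 s) (d2 s) D1 D2).
  - exact (continuity_pt_scal d1 c1 s C1).
  - apply (continuity_pt_scal (fun u => d2 u + g1 u * d1 u)).
    now apply continuity_pt_plus; [| apply continuity_pt_mult].
  - destruct (Req_dec (d1 s) 0) as [Z | Z].
    + right; rewrite Z, Rmult_0_r, Rplus_0_r.
      apply Rmult_integral_contrapositive; split; [exact Hc2 | now destruct Reg].
    + left; now apply Rmult_integral_contrapositive.
  - change (bde_form w' (c1 * g1 s) (c2 * (g2 s + g1 s ^ 2 / 2)) (c3 * t)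
              (c1 * d1 s) (c2 * (d2 s + g1 s * d1 s)) = 0).
    change (bde_form w (g1 s) (g2 s) t (d1 s) (d2 s) = 0) in E.
    now rewrite shear_pullback, E, Rmult_0_r.
Qed.

Lemma fiber_top_equiv_of_shear : c3 <> 0 -> fiber_top_equiv w w'.
Proof.
  intros Hc3.
  exists (fun x _ _ => c1 * x), (fun x y _ => c2 * (y + x ^ 2 / 2)), (fun t => c3 * t),
    (fun _ => True), (fun _ => True), (shear_inv c1 c2 c3).
  split; [| split].
  - exact (homeo_germ1_scal c3 Hc3).
  - exact (homeo3_on_shear c1 c2 c3 Hc1 Hc2 Hc3).
  - intros t s0 s1 g1 g2 Hg _.
    exists s0, s1, (fun s => c1 * g1 s), (fun s => c2 * (g2 s + g1 s ^ 2 / 2)).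
    split; [exact (integral_curve_shear t s0 s1 g1 g2 Hg) |].
    intros u v; apply iff_refl.
Qed.

End ShearTransport.

Lemma is_partial_x_unique (F Fx Gx : R -> R -> R -> R) :
  is_partial_x F Fx -> is_partial_x F Gx -> Fx = Gx.
Proof.
  intros HF HG; do 3 (apply functional_extensionality; intro).
  eapply uniqueness_limite; [apply HF | apply HG].
Qed.

Lemma is_partial_y_unique (F Fy Gy : R -> R -> R -> R) :
  is_partial_y F Fy -> is_partial_y F Gy -> Fy = Gy.
Proof.
  intros HF HG; do 3 (apply functional_extensionality; intro).
  eapply uniqueness_limite; [apply HF | apply HG].
Qed.

Ltac partial_by_derive := intros ? ? ?; apply is_derive_Reals; auto_derive; [easy | field].

Theorem mainTheorem13 (alpha : R) (Halpha : alpha <> 0)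
  (fx fy fxx fxy fyy : R -> R -> R -> R)
  (Hfx : is_partial_x (monge_f alpha) fx)
  (Hfy : is_partial_y (monge_f alpha) fy)
  (Hfxx : is_partial_x fx fxx)
  (Hfxy : is_partial_y fx fxy)
  (Hfyy : is_partial_y fy fyy) :
  fiber_top_equiv (mkBDE fyy fxy fxx) normal_form.
Proof.
  assert (Efx : fx = fun x y t => 2 * x * y + 3 * t * x ^ 2 + x ^ 3 + 5 * alpha * x ^ 4)
    by (apply (is_partial_x_unique _ _ _ Hfx); unfold monge_f; partial_by_derive).
  assert (Efy : fy = fun x y _ => 2 * y + x ^ 2)
    by (apply (is_partial_y_unique _ _ _ Hfy); unfold monge_f; partial_by_derive).
  subst fx fy.
  assert (Efxx : fxx = fun x y t => 2 * y + 6 * t * x + 3 * x ^ 2 + 20 * alpha * x ^ 3)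
    by (apply (is_partial_x_unique _ _ _ Hfxx); partial_by_derive).
  assert (Efxy : fxy = fun x _ _ => 2 * x)
    by (apply (is_partial_y_unique _ _ _ Hfxy); partial_by_derive).
  assert (Efyy : fyy = fun _ _ _ => 2)
    by (apply (is_partial_y_unique _ _ _ Hfyy); partial_by_derive).
  subst fxx fxy fyy.
  apply (fiber_top_equiv_of_shear _ _ (10 * alpha) (- (10 * alpha) ^ 2) (30 * alpha)
           (5000 * alpha ^ 4)); try (intro; apply Halpha; nra).
  intros x y t dx dy; unfold bde_form; cbn; field.
Qed.
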